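(* Let $C\subset V$ be an open cone containing no lines, with basepoint $b\in C$. The set of horofunctions of the reverse Funk geometry on $C$ is $\{r_{C,x}: x\in\partial C\setminus\{0\}\}$, and every one of these horofunctions is a Busemann point of the reverse Funk geometry. Moreover, if $D$ is a cross section of $C$, a sequence in $D$ converges in the reverse Funk sense to $r_{C,x}$ (with $x\in\partial C\setminus\{0\}$) if and only if it converges in the usual topology of $V$ to a positive multiple of $x$.
   Context: $V$ is a finite-dimensional real vector space. An open cone is a nonempty open convex set $T\subset V$ with $\lambda T\subseteq T$ for all $\lambda>0$ and $0\notin T$; $\partial T$ is its boundary in $V$. Write $x\le_T y$ iff $y-x\in\overline T$. For $y\in V$, $x\in T$: $M_T(y/x):=\inf\{\lambda>0:y\le_T\lambda x\}$, Funk function $F_T(y,x):=\log M_T(y/x)$, reverse Funk function $RF_T(x,y):=F_T(y,x)$. For $p\in\partial C\setminus\{0\}$, $r_{C,p}(x):=RF_C(x,p)-RF_C(b,p)$ for $x\in C$. A sequence $(x_n)$ in $C$ converges in the reverse Funk sense to $g:C\to\mathbb R$ if $RF_C(\cdot,x_n)-RF_C(b,x_n)\to g$ pointwise on $C$. A horofunction of the reverse Funk geometry is such a limit not of the form $RF_C(\cdot,p)-RF_C(b,p)$, $p\in C$. An almost-geodesic for $RF_C$ is a sequence $(x_l)$ in $C$ with, for some $\epsilon>0$, $\sum_{i=1}^l RF_C(x_{i-1},x_i)\le RF_C(x_0,x_l)+\epsilon$ for all $l\ge1$; a Busemann point is a reverse-Funk-sense limit of an almost-geodesic not of the form $RF_C(\cdot,p)-RF_C(b,p)$,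 $p\in C$. A cross section of $C$ is a set $D=\{x\in C:\psi(x)=1\}$ where $\psi$ is a linear functional on $V$ that is strictly positive on $\overline C\setminus\{0\}$. *)

From HB Require Import structures.
From mathcomp Require Import all_boot all_order all_algebra.
From mathcomp Require Import all_classical all_reals all_analysis.
Set Implicit Arguments. Unset Strict Implicit. Unset Printing Implicit Defensive.
Import Order.TTheory GRing.Theory Num.Theory.
Import numFieldNormedType.Exports.
Local Open Scope classical_set_scope.
Local Open Scope ring_scope.

Section FunkDefs.
Variables (R : realType) (n : nat).
Local Notation V := 'rV[R]_n.

Definition bdry (T : set V) : set V := closure T `\` interior T.

Definition open_cone (T : set V) : Prop :=
  [/\ T !=set0, open T,
      (forall x y t, T x -> T y -> 0 <= t -> t <= 1 -> T (t *: x + (1 - t) *: y)),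
      (forall x l, T x -> 0 < l -> T (l *: x)) & ~ T 0].

Definition no_lines (T : set V) : Prop :=
  forall x v : V, (forall t : R, T (x + t *: v)) -> v = 0.

Definition cone_le (T : set V) (x y : V) : Prop := closure T (y - x).

Definition Mfun (T : set V) (y x : V) : R :=
  inf [set l : R | 0 < l /\ cone_le T y (l *: x)].

Definition Funk (T : set V) (y x : V) : R := ln (Mfun T y x).

Definition RFunk (T : set V) (x y : V) : R := Funk T y x.

Definition rfun (C : set V) (b p : V) : V -> R :=
  fun x => RFunk C x p - RFunk C b p.

Definition RF_converges (C : set V) (b : V) (xs : nat -> V) (g : V -> R) : Prop :=
  (forall k, C (xs k)) /\
  forall z, C z -> (fun k => RFunk C z (xs k) - RFunk C b (xs k)) @ \oo --> g z.

Definition is_internal (C : set V) (b : V) (g : V -> R) : Prop :=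
  exists2 p, C p & forall z, C z -> g z = RFunk C z p - RFunk C b p.

Definition horofunction (C : set V) (b : V) (g : V -> R) : Prop :=
  (exists xs, RF_converges C b xs g) /\ ~ is_internal C b g.

Definition almost_geodesic (C : set V) (xs : nat -> V) : Prop :=
  (forall k, C (xs k)) /\
  exists2 eps : R, 0 < eps &
    forall l : nat, (1 <= l)%N ->
      \sum_(1 <= i < l.+1) RFunk C (xs i.-1) (xs i) <= RFunk C (xs 0%N) (xs l) + eps.

Definition busemann_point (C : set V) (b : V) (g : V -> R) : Prop :=
  (exists2 xs, almost_geodesic C xs & RF_converges C b xs g) /\ ~ is_internal C b g.

Definition cross_section_functional (C : set V) (psi : V -> R) : Prop :=
  (forall (a : R) (x y : V), psi (a *: x + y) = a * psi x + psi y) /\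
  (forall x, closure C x -> x != 0 -> 0 < psi x).

End FunkDefs.

From HB Require Import structures.
From mathcomp Require Import all_boot all_order all_algebra.
From mathcomp Require Import all_classical all_reals all_analysis.
From mathcomp Require Import unstable lra ring.
Import Order.TTheory GRing.Theory Num.Theory.
Import numFieldNormedType.Exports.
Local Open Scope classical_set_scope.
Local Open Scope ring_scope.
Set Implicit Arguments. Unset Strict Implicit. Unset Printing Implicit Defensive.

(* Write M(y/z) for [Mfun C y z]. For z in C the map y |-> M(y/z) is
   sublinear, positively homogeneous and Lipschitz, and it is positive on
   closure C \ {0} because C contains no line. Hence y |-> rfun C b y z is
   continuous on closure C \ {0} and invariant under positive rescaling of y,
   so every reverse-Funk limit of a sequence (x_k) equals rfun C b y for each
   cluster point y of x_k / |x_k|; these exist by compactness of the unit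
   sphere. Testing with z = x + e b shows that rfun C b x and rfun C b y agree
   on C only if y is a positive multiple of x, and that for x in the boundary
   rfun C b x is not internal, since M(p/z) blows up as z approaches x while
   M(x/z) stays below 1. Conversely x + b/(k+1) tends to x and decreases for
   the cone order, which makes it an almost-geodesic. On a cross section
   psi = 1 the scale of the limit is forced to be 1 / psi x. *)

Lemma subr_eq_addr (M : zmodType) (a b c d : M) : a - b = c - d -> c = d - b + a.
Proof. by move=> abcd; rewrite addrAC -addrA abcd addrC subrK. Qed.

Section NormedModule.
Variables (R : realType) (V : normedModType R).
Implicit Types (a v x y : V) (xs : nat -> V).

Lemma closure_normP (A : set V) y :
  closure A y <-> forall e : R, 0 < e -> exists2 w, A w & `|y - w| < e.
Proof.
split=> [Ay e e0|Ay B /nbhs_ballP [e e0 eB]].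
  have [|w [Aw yw]] := Ay (ball y e); first exact: nbhsx_ballx.
  by exists w; move: yw; rewrite -ball_normE.
have [w Aw yw] := Ay e e0.
by exists w; split => //; apply: eB; rewrite -ball_normE.
Qed.

Definition harmonic_path (x a : V) (k : nat) : V := x + harmonic k *: a.

Lemma harmonic_path_cvg x a : harmonic_path x a @ \oo --> x.
Proof.
have := cvgD (cvg_cst x) (cvgZ (@cvg_harmonic R) (cvg_cst a)).
by rewrite scale0r addr0 => h; exact: h.
Qed.

Lemma closure_shift (A : set V) v a :
  (forall e : R, 0 < e -> closure A (v + e *: a)) -> closure A v.
Proof.
move=> Ashift.
apply: (closed_cvg _ (@closed_closure _ A) _ _ (@harmonic_path_cvg v a)).
by apply: nearW => k; apply: Ashift; exact: harmonic_gt0.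
Qed.

Lemma lipschitz_continuous (f : V -> R) (K : R) : 0 < K ->
  (forall u v, f u <= f v + K * `|u - v|) -> continuous f.
Proof.
move=> K0 f_lip x; apply/(@cvgrPdist_lt _ _ _ (nbhs x) (nbhs_filter x)) => e e0.
apply/nbhs_ballP; exists (e / K) => /=; first by rewrite divr_gt0.
move=> y; rewrite -ball_normE /= => xy.
rewrite real_ltr_norml ?num_real //; apply/andP; split.
  rewrite ltrNl opprB ltrBlDl; apply: le_lt_trans (f_lip y x) _; rewrite ltrD2l.
  by rewrite distrC -ltr_pdivlMl // mulrC.
rewrite ltrBlDl; apply: le_lt_trans (f_lip x y) _; rewrite ltrD2l.
by rewrite -ltr_pdivlMl // mulrC.
Qed.

Definition normalize (xs : nat -> V) (k : nat) : V := `|xs k|^-1 *: xs k.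

Lemma normalize_norm1 (xs : nat -> V) :
  (forall k, xs k != 0) -> forall k, `|normalize xs k| = 1.
Proof.
move=> xs0 k; rewrite /normalize normrZ gtr0_norm ?invr_gt0 ?normr_gt0 //.
by rewrite mulVf ?normr_eq0.
Qed.

End NormedModule.

Lemma cluster_seq_closure (T : topologicalType) (ys : nat -> T) (A : set T) y :
  (forall k, A (ys k)) -> cluster (ys @ \oo) y -> closure A y.
Proof. by move=> Ays cy B yB; apply: (cy A B) => //; exists 0%N => // k _; exact: Ays. Qed.

Lemma cluster_seq_cvg_eq (T U : topologicalType) (ys : nat -> T) (f : T -> U) y l :
  hausdorff_space U -> cluster (ys @ \oo) y -> {for y, continuous f} ->
  f \o ys @ \oo --> l -> f y = l.
Proof.
move=> hU cy fy fys; apply/esym/hU; apply: (cvg_cluster fys).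
by move=> A B fysA /fy fyB; have [v [Av Bv]] := cy (f @^-1` A) _ fysA fyB; exists (f v).
Qed.

Section UnitSphere.
Variables (R : realType) (n : nat).
Local Notation V := 'rV[R]_n.

Lemma closed_ball0_compact (r : R) : 0 < r -> compact (closed_ball (0 : V) r).
Proof.
move=> r0; apply: bounded_closed_compact; last exact: closed_ball_closed.
exists r; split; first by rewrite num_real.
move=> M rM x; rewrite closed_ballE // /closed_ball_ /= sub0r normrN => xr.
exact: le_trans xr (ltW rM).
Qed.

Lemma norm1_in_closed_ball (y : V) : `|y| = 1 -> closed_ball (0 : V) 2 y.
Proof.
by move=> y1; rewrite closed_ballE ?ltr0n // /closed_ball_ /= sub0r normrN y1 ler1n.
Qed.

Lemma norm1_cluster (ys : nat -> V) y :
  (forall k, `|ys k| = 1) -> cluster (ys @ \oo) y -> `|y| = 1.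
Proof.
move=> ys1 cy; apply: (cluster_seq_cvg_eq (@norm_hausdorff R R^o) cy).
  exact: norm_continuous.
have -> : Num.norm \o ys = fun=> 1 by apply: funext => k /=; rewrite ys1.
exact: cvg_cst.
Qed.

Lemma norm1_cluster_ex (ys : nat -> V) :
  (forall k, `|ys k| = 1) -> exists y, cluster (ys @ \oo) y.
Proof.
move=> ys1; have [|y [_ cy]] := closed_ball0_compact (ltr0n R 2) (F := ys @ \oo).
  by exists 0%N => // k _; apply: norm1_in_closed_ball.
by exists y.
Qed.

Lemma norm1_cvg_unique_cluster (ys : nat -> V) p :
  (forall k, `|ys k| = 1) -> `|p| = 1 ->
  (forall y, cluster (ys @ \oo) y -> y = p) -> ys @ \oo --> p.
Proof.
move=> ys1 p1 cys_p.
apply: (compact_cluster_set1 (@norm_hausdorff R V) (closed_ball0_compact (ltr0n R 2))).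
- apply/nbhs_ballP; exists 1 => //= w; rewrite -ball_normE /= => pw.
  rewrite closed_ballE ?ltr0n // /closed_ball_ /= sub0r normrN.
  have : `|w| <= `|p| + `|w - p| by rewrite -{1}(subrK p w) addrC ler_normD.
  by rewrite p1 distrC => /le_trans; apply; rewrite [2]mulr2n lerD2l ltW.
- by exists 0%N => // k _; apply: norm1_in_closed_ball.
- apply/seteqP; split=> y; first exact: cys_p.
  by move=> /= ->; have [y' cy'] := norm1_cluster_ex ys1; rewrite -(cys_p _ cy').
Qed.

End UnitSphere.

Section OpenCone.
Variables (R : realType) (n : nat).
Local Notation V := 'rV[R]_n.
Variable C : set V.
Hypothesis hC : open_cone C.
Hypothesis hL : no_lines C.
Implicit Types (p u v w x y z : V) (xs : nat -> V) (e l E : R) (g psi : V -> R).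

Lemma open_cone_ball p : C p -> exists2 r : R, 0 < r & forall w, `|p - w| < r -> C w.
Proof.
case: hC => _ oC _ _ _ Cp; have /nbhs_ballP [r r0 rC] : nbhs p C by rewrite openE in oC; exact: oC.
by exists r => // w cw; apply: rC; rewrite -ball_normE.
Qed.

Lemma open_coneZ x l : C x -> 0 < l -> C (l *: x).
Proof. by case: hC => _ _ _ CZ _; apply: CZ. Qed.

Lemma open_coneD x y : C x -> C y -> C (x + y).
Proof.
case: hC => _ _ convC _ _ Cx Cy.
have h0 : 0 <= 2^-1 :> R by rewrite invr_ge0 ler0n.
have h1 : 2^-1 <= 1 :> R by rewrite invf_le1 ?ltr0n ?ler1n.
have -> : x + y = 2 *: (2^-1 *: x + (1 - 2^-1) *: y).
  have -> : (1 - 2^-1 : R) = 2^-1 by rewrite {1}(splitr 1) mul1r addrK.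
  by rewrite scalerDr !scalerA divff ?pnatr_eq0 // !scale1r.
by apply: open_coneZ; [exact: convC | rewrite ltr0n].
Qed.

Lemma open_cone_neq0 x : C x -> x != 0.
Proof. by case: hC => _ _ _ _ C0 Cx; apply: contra_notN C0 => /eqP <-. Qed.

Lemma open_cone_closureZ x l : closure C x -> 0 <= l -> closure C (l *: x).
Proof.
move=> /closure_normP cx; rewrite le_eqVlt => /orP [/eqP <-|l0].
  case: hC => [[c Cc] _ _ _ _]; rewrite scale0r; apply/closure_normP => e e0.
  have c1 : 0 < `|c| + 1 by rewrite ltr_wpDl.
  exists ((e / (`|c| + 1)) *: c); first by apply: open_coneZ; rewrite ?divr_gt0.
  rewrite sub0r normrN normrZ gtr0_norm ?divr_gt0 // mulrAC ltr_pdivrMr //.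
  by rewrite ltr_pM2l // ltrDl.
apply/closure_normP => e e0; have [w Cw xw] := cx (e / l) (divr_gt0 e0 l0).
exists (l *: w); first exact: open_coneZ.
by rewrite -scalerBr normrZ gtr0_norm // mulrC -ltr_pdivlMr.
Qed.

Lemma open_cone_closure0 : closure C 0.
Proof.
case: hC => [[c Cc] _ _ _ _]; rewrite -(scale0r c).
exact: open_cone_closureZ (subset_closure Cc) _.
Qed.

Lemma open_cone_closureDC x y : closure C x -> C y -> C (x + y).
Proof.
move=> /closure_normP cx Cy; have [r r0 rC] := open_cone_ball Cy.
have [w Cw xw] := cx r r0.
have -> : x + y = (y + (x - w)) + w by rewrite addrC -addrA subrK.
by apply: open_coneD => //; apply: rC; rewrite opprD addrA subrr sub0r normrN.
Qed.

Lemma open_cone_closureD x y : closure C x -> closure C y -> closure C (x + y).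
Proof.
move=> /closure_normP cx /closure_normP cy; apply/closure_normP => e e0.
have [w1 C1 x1] := cx (e / 2) (divr_gt0 e0 (ltr0n _ 2)).
have [w2 C2 y2] := cy (e / 2) (divr_gt0 e0 (ltr0n _ 2)).
exists (w1 + w2); first exact: open_coneD.
rewrite opprD addrACA; apply: le_lt_trans (ler_normD _ _) _.
by rewrite (splitr e) ltrD.
Qed.

Lemma closure_open_cone_pointed u : closure C u -> closure C (- u) -> u = 0.
Proof.
move=> cu cNu; case: hC => [[c Cc] _ _ _ _].
apply: (hL (x := c)) => t; rewrite addrC; apply: open_cone_closureDC Cc.
have [t0|t0] := leP 0 t; first exact: open_cone_closureZ.
by rewrite -[t]opprK scaleNr -scalerN; apply: open_cone_closureZ; rewrite // oppr_ge0 ltW.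
Qed.

Lemma bdry_open_coneP x : bdry C x <-> closure C x /\ ~ C x.
Proof.
case: hC => _ oC _ _ _; rewrite /bdry; have -> : interior C = C by apply/interior_id.
by split=> -[].
Qed.

Lemma open_cone_absorbing z : C z ->
  exists2 r : R, 0 < r & forall w l, 0 < l -> `|w| < r * l -> C (l *: z - w).
Proof.
move=> Cz; have [r r0 rC] := open_cone_ball Cz; exists r => // w l l0 wl.
have -> : l *: z - w = l *: (z - l^-1 *: w).
  by rewrite scalerBr scalerA divff ?scale1r // gt_eqF.
apply: open_coneZ => //; apply: rC.
by rewrite opprB addrC subrK normrZ gtr0_norm ?invr_gt0 // mulrC ltr_pdivrMr.
Qed.

Lemma Mfun_feasible y z : C z -> [set l : R | 0 < l /\ cone_le C y (l *: z)] !=set0.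
Proof.
move=> Cz; have [r r0 absorb] := open_cone_absorbing Cz.
have l0 : 0 < `|y| / r + 1 by rewrite ltr_wpDl // divr_ge0 // ltW.
exists (`|y| / r + 1); split => //; apply/subset_closure/absorb => //.
by rewrite mulrDr mulrCA divff ?gt_eqF // mulr1 mulr1 ltrDl.
Qed.

Lemma Mfun_ge0 y z : C z -> 0 <= Mfun C y z.
Proof. by move=> Cz; apply: lb_le_inf (Mfun_feasible y Cz) _ => l [/ltW]. Qed.

Lemma Mfun_leP y z l : C z -> 0 < l -> closure C (l *: z - y) <-> Mfun C y z <= l.
Proof.
move=> Cz l0; split=> [yl|yl].
  by apply: ge_inf; [exists 0 => m [/ltW] | split].
apply: (closure_shift (a := z)) => e e0.
have lle : l < l + e by rewrite ltrDl.
have [m [_ ym] ml] := inf_lt (Mfun_feasible y Cz) (le_lt_trans yl lle).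
have -> : l *: z - y + e *: z = (m *: z - y) + (l + e - m) *: z.
  by rewrite scalerBl scalerDl [RHS]addrC addrA subrK addrAC.
apply: open_cone_closureD ym _; apply: open_cone_closureZ (subset_closure Cz) _.
by rewrite subr_ge0 (ltW ml).
Qed.

Lemma Mfun_monotone z u v : C z -> closure C (v - u) -> Mfun C u z <= Mfun C v z.
Proof.
move=> Cz vu; apply/ler_gtP => l vl.
have l0 : 0 < l by apply: le_lt_trans vl; apply: Mfun_ge0.
apply/(Mfun_leP _ Cz l0); have := (Mfun_leP v Cz l0).2 (ltW vl).
by move=> /open_cone_closureD /(_ vu); rewrite addrA subrK.
Qed.

Lemma Mfun_self z : C z -> Mfun C z z <= 1.
Proof.
move=> Cz; apply/(Mfun_leP _ Cz ltr01).
by rewrite scale1r subrr; exact: open_cone_closure0.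
Qed.

Lemma MfunD_le z u v : C z -> Mfun C (u + v) z <= Mfun C u z + Mfun C v z.
Proof.
move=> Cz; apply/ler_addgt0Pr => e e0.
have e2 : 0 < e / 2 by rewrite divr_gt0.
have pos w : 0 < Mfun C w z + e / 2 by rewrite ltr_wpDl ?Mfun_ge0.
have bound w : closure C ((Mfun C w z + e / 2) *: z - w).
  by apply/(Mfun_leP _ Cz (pos w)); rewrite lerDl ltW.
have -> : Mfun C u z + Mfun C v z + e = (Mfun C u z + e / 2) + (Mfun C v z + e / 2).
  by rewrite addrACA -splitr.
apply/(Mfun_leP _ Cz); first by rewrite addr_gt0.
by rewrite scalerDl opprD addrACA; exact: open_cone_closureD.
Qed.

Lemma MfunZ_le z u c : C z -> 0 < c -> Mfun C (c *: u) z <= c * Mfun C u z.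
Proof.
move=> Cz c0; apply/ler_gtP => l ul.
have l0 : 0 < l by apply: le_lt_trans ul; rewrite mulr_ge0 ?Mfun_ge0 ?ltW.
apply/(Mfun_leP _ Cz l0).
have lc0 : 0 < l / c by rewrite divr_gt0.
have := (Mfun_leP u Cz lc0).2 (ltW _); rewrite ltr_pdivlMr // mulrC => /(_ ul) cu.
have := open_cone_closureZ cu (ltW c0).
by rewrite scalerBr scalerA mulrC divfK ?gt_eqF.
Qed.

Lemma MfunZ z u c : C z -> 0 < c -> Mfun C (c *: u) z = c * Mfun C u z.
Proof.
move=> Cz c0; apply/eqP; rewrite eq_le MfunZ_le //=.
have ci : 0 < c^-1 by rewrite invr_gt0.
have := MfunZ_le (c *: u) Cz ci; rewrite scalerA mulVf ?gt_eqF // scale1r.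
by rewrite ler_pdivlMl.
Qed.

Lemma Mfun_le_norm z : C z -> exists2 K : R, 0 < K & forall w, Mfun C w z <= K * `|w|.
Proof.
move=> Cz; have [r r0 absorb] := open_cone_absorbing Cz.
have rV0 : 0 < r^-1 by rewrite invr_gt0.
exists r^-1 => // w; apply/ler_gtP => l wl.
have l0 : 0 < l := le_lt_trans (mulr_ge0 (ltW rV0) (normr_ge0 w)) wl.
apply/(Mfun_leP _ Cz l0)/subset_closure/absorb => //.
by rewrite -ltr_pdivrMl // mulrC.
Qed.

Lemma Mfun_gt0 z u : C z -> closure C u -> u != 0 -> 0 < Mfun C u z.
Proof.
move=> Cz cu; apply: contra_neqT; rewrite -leNgt => Mu0.
apply: closure_open_cone_pointed => //.
apply: (closure_shift (a := z)) => e e0; rewrite addrC.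
by apply/(Mfun_leP _ Cz e0); apply: le_trans Mu0 (ltW e0).
Qed.

Lemma Mfun_continuous z : C z -> continuous (fun u => Mfun C u z).
Proof.
move=> Cz; have [K K0 MK] := Mfun_le_norm Cz; apply: (lipschitz_continuous K0) => u v.
have := MfunD_le v (u - v) Cz; rewrite addrC subrK => /le_trans; apply.
by rewrite lerD2l.
Qed.

Lemma normalize_in_cone (xs : nat -> V) : (forall k, C (xs k)) -> forall k, C (normalize xs k).
Proof.
move=> Cxs k; apply: open_coneZ => //.
by rewrite invr_gt0 normr_gt0 open_cone_neq0.
Qed.

Lemma cross_section_linear (psi : V -> R) : cross_section_functional C psi ->
  [/\ psi 0 = 0, (forall u v, psi (u + v) = psi u + psi v),
      (forall c u, psi (c *: u) = c * psi u) & (forall w, closure C w -> 0 <= psi w)].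
Proof.
case=> psi_lin psi_pos.
have psi0 : psi 0 = 0.
  have := psi_lin 1 0 0; rewrite scaler0 addr0 mul1r.
  by move=> /esym /eqP; rewrite -subr_eq0 addrK => /eqP.
have psiD u v : psi (u + v) = psi u + psi v by have := psi_lin 1 u v; rewrite scale1r mul1r.
split => // [c u|w cw]; first by rewrite -[c *: u]addr0 psi_lin psi0 addr0.
by have [->|w0] := eqVneq w 0; [rewrite psi0 | exact/ltW/psi_pos].
Qed.

Lemma cross_section_continuous (psi : V -> R) :
  cross_section_functional C psi -> continuous psi.
Proof.
move=> hpsi; have [_ psiD psiZ psi_ge0] := cross_section_linear hpsi.
case: hC => [[c Cc] _ _ _ _].
have pc : 0 < psi c by case: hpsi => _; apply; [exact: subset_closure | exact: open_cone_neq0].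
have [K K0 MK] := Mfun_le_norm Cc.
have psi_le v : psi v <= (K * psi c) * `|v|.
  rewrite mulrAC -ler_pdivrMr //; apply/ler_gtP => l vl.
  have l0 : 0 < l by apply: le_lt_trans vl; rewrite mulr_ge0 // ltW.
  have /psi_ge0 := (Mfun_leP v Cc l0).2 (le_trans (MK v) (ltW vl)).
  by rewrite -scaleN1r psiD !psiZ mulN1r subr_ge0 ler_pdivrMr.
apply: (lipschitz_continuous (mulr_gt0 K0 pc)) => u v.
by rewrite -{1}(subrK v u) psiD addrC lerD2l psi_le.
Qed.

Section Basepoint.
Variable b : V.
Hypothesis Cb : C b.

Lemma RFunkZ z u c : C z -> closure C u -> u != 0 -> 0 < c ->
  RFunk C z (c *: u) = ln c + RFunk C z u.
Proof.
move=> Cz cu u0 c0; rewrite /RFunk /Funk MfunZ // lnM // posrE //.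
exact: Mfun_gt0.
Qed.

Lemma rfunZ z u c : C z -> closure C u -> u != 0 -> 0 < c ->
  rfun C b (c *: u) z = rfun C b u z.
Proof.
move=> Cz cu u0 c0; rewrite /rfun !RFunkZ //.
by rewrite opprD addrACA subrr add0r.
Qed.

Lemma rfun_continuous z u : C z -> closure C u -> u != 0 ->
  {for u, continuous (fun y => rfun C b y z)}.
Proof.
move=> Cz cu u0.
have RFunk_cont w : C w -> {for u, continuous (fun y => RFunk C w y)}.
  move=> Cw; have -> : (fun y => RFunk C w y) = (@ln R) \o (fun y => Mfun C y w) by [].
  apply: continuous_comp; first exact: Mfun_continuous.
  exact/continuous_ln/Mfun_gt0.
exact: continuousB (RFunk_cont z Cz) (RFunk_cont b Cb).
Qed.

Lemma Mfun_shift_le1 x e : closure C x -> 0 < e -> Mfun C x (x + e *: b) <= 1.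
Proof.
move=> cx e0; have Cz := open_cone_closureDC cx (open_coneZ Cb e0).
apply: le_trans (Mfun_self Cz); apply: Mfun_monotone Cz _.
by rewrite addrC addKr; exact/subset_closure/open_coneZ.
Qed.

(* Were M(p/z) <= E, then E z - p would lie in closure C, and as p is interior
   to C this would put E x in C. *)
Lemma Mfun_bdry_unbounded p x E : C p -> closure C x -> ~ C x -> 0 < E ->
  exists2 e : R, 0 < e & E < Mfun C p (x + e *: b).
Proof.
move=> Cp cx nCx E0; have [r r0 rC] := open_cone_ball Cp.
have b0 : 0 < `|b| by rewrite normr_gt0 open_cone_neq0.
set e := r / (2 * `|b| * E); have e0 : 0 < e by rewrite divr_gt0 // !mulr_gt0.
exists e => //; rewrite ltNge; apply/negP.
have Cz := open_cone_closureDC cx (open_coneZ Cb e0).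
move=> /(Mfun_leP _ Cz E0) Ez_p.
have Cq : C (p - (E * e) *: b).
  apply: rC; rewrite opprB addrC subrK normrZ (gtr0_norm (mulr_gt0 E0 e0)).
  have -> : E * e * `|b| = r / 2 by rewrite /e; field; rewrite !gt_eqF.
  lra.
have := open_cone_closureDC Ez_p Cq.
rewrite scalerDr scalerA addrA subrK addrK => CEx; apply: nCx.
have := open_coneZ CEx (_ : 0 < E^-1); rewrite invr_gt0 => /(_ E0).
by rewrite scalerA mulVf ?gt_eqF // scale1r.
Qed.

Lemma rfun_eq_Mfun z x y : C z -> closure C x -> x != 0 -> closure C y -> y != 0 ->
  rfun C b x z = rfun C b y z -> Mfun C y z = Mfun C y b / Mfun C x b * Mfun C x z.
Proof.
move=> Cz cx x0 cy y0; rewrite /rfun /RFunk /Funk => rfun_xy.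
have [[yb xb] xz] := (Mfun_gt0 Cb cy y0, Mfun_gt0 Cb cx x0, Mfun_gt0 Cz cx x0).
have xbV : 0 < (Mfun C x b)^-1 by rewrite invr_gt0 xb.
have yxb : 0 < Mfun C y b / Mfun C x b := mulr_gt0 yb xbV.
apply: (ln_inj (Mfun_gt0 Cz cy y0 : _ \in Num.pos) (mulr_gt0 yxb xz : _ \in Num.pos)).
rewrite (lnM (yxb : _ \in Num.pos) (xz : _ \in Num.pos)).
rewrite (lnM (yb : _ \in Num.pos) (xbV : _ \in Num.pos)) (lnV (xb : _ \in Num.pos)).
exact: subr_eq_addr rfun_xy.
Qed.

(* An internal p would give M(p/z) = M(p/b) / M(x/b) * M(x/z) <= M(p/b) / M(x/b)
   for all z in C. *)
Lemma rfun_not_internal x : bdry C x -> x != 0 -> ~ is_internal C b (rfun C b x).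
Proof.
move=> /bdry_open_coneP [cx nCx] x0 [p Cp rfun_p].
have cp := subset_closure Cp; have p0 := open_cone_neq0 Cp.
have K0 : 0 < Mfun C p b / Mfun C x b by rewrite divr_gt0 ?Mfun_gt0.
have [e e0] := Mfun_bdry_unbounded Cp cx nCx K0; apply/negP; rewrite -leNgt.
have Cz := open_cone_closureDC cx (open_coneZ Cb e0).
rewrite (rfun_eq_Mfun Cz cx x0 cp p0 (rfun_p _ Cz)).
by rewrite -[leRHS]mulr1 ler_pM2l // Mfun_shift_le1.
Qed.

Lemma rfun_eq_cone_le x y : closure C x -> x != 0 -> closure C y -> y != 0 ->
  (forall z, C z -> rfun C b x z = rfun C b y z) ->
  closure C ((Mfun C y b / Mfun C x b) *: x - y).
Proof.
move=> cx x0 cy y0 rfun_xy; set k := Mfun C y b / Mfun C x b.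
have k0 : 0 < k by rewrite divr_gt0 ?Mfun_gt0.
apply: (closure_shift (a := b)) => e e0.
have ek : 0 < e / k by rewrite divr_gt0.
have Cz := open_cone_closureDC cx (open_coneZ Cb ek).
have : Mfun C y (x + (e / k) *: b) <= k.
  rewrite (rfun_eq_Mfun Cz cx x0 cy y0 (rfun_xy _ Cz)) -/k.
  by rewrite -[leRHS]mulr1 ler_pM2l // Mfun_shift_le1.
move=> /(Mfun_leP y Cz k0).
by rewrite scalerDr scalerA mulrC divfK ?gt_eqF // addrAC.
Qed.

Lemma rfun_inj x y : closure C x -> x != 0 -> closure C y -> y != 0 ->
  (forall z, C z -> rfun C b x z = rfun C b y z) -> exists2 k : R, 0 < k & y = k *: x.
Proof.
move=> cx x0 cy y0 rfun_xy.
have yx := rfun_eq_cone_le cx x0 cy y0 rfun_xy.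
have xy := rfun_eq_cone_le cy y0 cx x0 (fun z Cz => esym (rfun_xy z Cz)).
have [Mxb Myb] := (Mfun_gt0 Cb cx x0, Mfun_gt0 Cb cy y0).
set k := Mfun C y b / Mfun C x b in yx *.
have k0 : 0 < k := divr_gt0 Myb Mxb.
have kk : k * (Mfun C x b / Mfun C y b) = 1.
  by rewrite mulrA (divfK (lt0r_neq0 Mxb)) (divff (lt0r_neq0 Myb)).
exists k; first exact: k0.
apply/esym/eqP; rewrite -subr_eq0; apply/eqP/(closure_open_cone_pointed yx).
have := open_cone_closureZ xy (ltW k0).
by rewrite scalerBr scalerA kk scale1r opprB.
Qed.

Lemma harmonic_path_in_cone x : closure C x -> forall k, C (harmonic_path x b k).
Proof. by move=> cx k; apply/(open_cone_closureDC cx)/open_coneZ/harmonic_gt0. Qed.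

Lemma rfun_harmonic_path x : closure C x -> x != 0 ->
  RF_converges C b (harmonic_path x b) (rfun C b x).
Proof.
move=> cx x0; split=> [|z Cz]; first exact: harmonic_path_in_cone.
have := continuous_cvg _ (rfun_continuous Cz cx x0) (@harmonic_path_cvg _ _ x b).
by apply.
Qed.

Lemma harmonic_path_decr x j k : (j <= k)%N ->
  closure C (harmonic_path x b j - harmonic_path x b k).
Proof.
move=> jk; rewrite /harmonic_path opprD addrACA subrr add0r -scalerBl.
apply: open_cone_closureZ (subset_closure Cb) _.
by rewrite subr_ge0 lef_pV2 ?posrE ?ltr0n // ler_nat ltnS.
Qed.

(* Every step has RF <= 0 since the path decreases for the cone order, while
   RF(p_0, p_l) >= ln M(x/p_0) because p_l - x lies in C. *)
Lemma almost_geodesic_harmonic_path x : closure C x -> x != 0 ->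
  almost_geodesic C (harmonic_path x b).
Proof.
move=> cx x0; split; first exact: harmonic_path_in_cone.
set p := harmonic_path x b; have C0 := harmonic_path_in_cone cx 0.
set m := ln (Mfun C x (p 0%N)).
exists (`|m| + 1) => [|l _]; first by rewrite ltr_wpDl.
have steps : \sum_(1 <= i < l.+1) RFunk C (p i.-1) (p i) <= 0.
  apply: sumr_le0 => i _; have Ci := harmonic_path_in_cone cx i.-1.
  apply/ln_le0/(le_trans _ (Mfun_self Ci))/(Mfun_monotone Ci).
  exact/harmonic_path_decr/leq_pred.
have start : m <= RFunk C (p 0%N) (p l).
  have px : closure C (p l - x).
    by rewrite addrC addKr; exact/subset_closure/open_coneZ/harmonic_gt0.
  have Mx := Mfun_gt0 C0 cx x0; have Mmono := Mfun_monotone C0 px.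
  rewrite /m /RFunk /Funk (ler_ln (Mx : _ \in Num.pos) (lt_le_trans Mx Mmono : _ \in Num.pos)).
  exact: Mmono.
apply: le_trans steps (ltW _); rewrite addrA; apply: ltr_wpDl ltr01.
by rewrite -[`|m|]opprK subr_ge0; exact: le_trans (lerNnormlW (lexx _)) start.
Qed.

Lemma rfun_cluster xs g y : RF_converges C b xs g -> cluster (normalize xs @ \oo) y ->
  [/\ closure C y, y != 0 & forall z, C z -> g z = rfun C b y z].
Proof.
move=> [Cxs xs_g] cy; have xs0 k := open_cone_neq0 (Cxs k).
have cly := cluster_seq_closure (normalize_in_cone Cxs) cy.
have y0 : y != 0 by rewrite -normr_eq0 (norm1_cluster (normalize_norm1 xs0) cy) oner_neq0.
split => // z Cz; apply/esym.
apply: (cluster_seq_cvg_eq (f := fun y => rfun C b y z) (@norm_hausdorff R R^o) cy).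
  exact: rfun_continuous.
have -> : (fun y => rfun C b y z) \o normalize xs =
          fun k => RFunk C z (xs k) - RFunk C b (xs k).
  apply: funext => k /=; apply: rfunZ => //; first exact/subset_closure.
  by rewrite invr_gt0 normr_gt0.
exact: xs_g.
Qed.

Lemma normalize_cvg xs x : closure C x -> x != 0 -> RF_converges C b xs (rfun C b x) ->
  normalize xs @ \oo --> `|x|^-1 *: x.
Proof.
move=> cx x0 xs_x; have xs0 k := open_cone_neq0 (xs_x.1 k).
have nx : 0 < `|x| by rewrite normr_gt0.
apply: (norm1_cvg_unique_cluster (normalize_norm1 xs0)).
  by rewrite normrZ gtr0_norm ?invr_gt0 // mulVf ?gt_eqF.
move=> y cy; have [cly y0 y_x] := rfun_cluster xs_x cy.
have [k k0 ykx] := rfun_inj cx x0 cly y0 y_x.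
have := norm1_cluster (normalize_norm1 xs0) cy; rewrite ykx normrZ gtr0_norm // => kx1.
by congr (_ *: _); apply/(mulIf (lt0r_neq0 nx)); rewrite kx1 mulVf ?lt0r_neq0.
Qed.

Lemma horofunction_rfun g : horofunction C b g ->
  exists x, [/\ bdry C x, x != 0 & forall z, C z -> g z = rfun C b x z].
Proof.
move=> [[xs xs_g] not_internal].
have [y cy] := norm1_cluster_ex (normalize_norm1 (fun k => open_cone_neq0 (xs_g.1 k))).
have [cly y0 g_y] := rfun_cluster xs_g cy.
exists y; split => //; apply/bdry_open_coneP; split => // Cy.
by apply: not_internal; exists y.
Qed.

Lemma rfun_horofunction g x : bdry C x -> x != 0 ->
  (forall z, C z -> g z = rfun C b x z) -> horofunction C b g.
Proof.
move=> bx x0 g_x; have [cx _] := (bdry_open_coneP x).1 bx.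
split=> [|[p Cp g_p]].
  exists (harmonic_path x b); split=> [|z Cz]; first exact: harmonic_path_in_cone.
  by rewrite g_x //; exact: (rfun_harmonic_path cx x0).2.
apply: (rfun_not_internal bx x0); exists p; first exact: Cp.
by move=> z Cz; exact: etrans (esym (g_x z Cz)) (g_p z Cz).
Qed.

Lemma rfun_busemann x : bdry C x -> x != 0 -> busemann_point C b (rfun C b x).
Proof.
move=> bx x0; have [cx _] := (bdry_open_coneP x).1 bx.
split; last exact: rfun_not_internal.
exists (harmonic_path x b); [exact: almost_geodesic_harmonic_path | exact: rfun_harmonic_path].
Qed.

Lemma RF_converges_of_cvg x xs l : closure C x -> x != 0 -> (forall k, C (xs k)) ->
  0 < l -> xs @ \oo --> l *: x -> RF_converges C b xs (rfun C b x).
Proof.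
move=> cx x0 Cxs l0 xs_lx; split => // z Cz.
have lx0 : l *: x != 0 by rewrite scaler_eq0 negb_or x0 gt_eqF.
have := continuous_cvg _ (rfun_continuous Cz (open_cone_closureZ cx (ltW l0)) lx0) xs_lx.
by rewrite (rfunZ Cz cx x0 l0) => h; exact: h.
Qed.

(* On the cross section, xs k = (psi (normalize xs k))^-1 *: normalize xs k. *)
Lemma cvg_of_RF_converges psi x xs : cross_section_functional C psi ->
  closure C x -> x != 0 -> (forall k, C (xs k) /\ psi (xs k) = 1) ->
  RF_converges C b xs (rfun C b x) -> exists2 l : R, 0 < l & xs @ \oo --> l *: x.
Proof.
move=> hpsi cx x0 xs_D xs_x; have [_ _ psiZ _] := cross_section_linear hpsi.
have px : 0 < psi x by case: hpsi => _; apply.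
have nx : `|x|^-1 != 0 by rewrite invr_eq0 normr_eq0.
have xs_cvg := normalize_cvg cx x0 xs_x.
have psi_p : psi (`|x|^-1 *: x) != 0 by rewrite psiZ; apply: mulf_neq0 nx (lt0r_neq0 px).
have psi_cont : {for `|x|^-1 *: x, continuous psi} by exact: cross_section_continuous.
have := cvgZ (cvgV psi_p (continuous_cvg _ psi_cont xs_cvg)) xs_cvg.
have -> : (fun k => (psi (normalize xs k))^-1 *: normalize xs k) = xs.
  apply: funext => k; rewrite /normalize psiZ (xs_D k).2 mulr1 scalerA invrK.
  by rewrite divff ?scale1r // normr_eq0 (open_cone_neq0 (xs_D k).1).
rewrite psiZ scalerA invfM mulrAC (mulVf nx) mul1r => xs_lim.
by exists (psi x)^-1; [rewrite invr_gt0 | exact: xs_lim].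
Qed.

End Basepoint.

End OpenCone.

Theorem mainTheorem4 (R : realType) (n : nat) (C : set 'rV[R]_n) (b : 'rV[R]_n) :
  open_cone C -> no_lines C -> C b ->
  [/\ (forall g : 'rV[R]_n -> R,
         horofunction C b g <->
         exists x, [/\ bdry C x, x != 0 & forall z, C z -> g z = rfun C b x z]),
      (forall x, bdry C x -> x != 0 -> busemann_point C b (rfun C b x)) &
      (forall (psi : 'rV[R]_n -> R), cross_section_functional C psi ->
       forall x, bdry C x -> x != 0 ->
       forall xs : nat -> 'rV[R]_n, (forall k, C (xs k) /\ psi (xs k) = 1) ->
         (RF_converges C b xs (rfun C b x) <->
          exists2 l : R, 0 < l & xs @ \oo --> l *: x))].
Proof.
move=> hC hL Cb; split.
- move=> g; split; first exact: (horofunction_rfun hC hL Cb).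
  by move=> [x [bx x0 g_x]]; exact: (rfun_horofunction hC hL Cb bx x0 g_x).
- exact: (rfun_busemann hC hL Cb).
- move=> psi hpsi x bx x0 xs xs_D; have [cx _] := (bdry_open_coneP hC x).1 bx.
  split; first exact: (cvg_of_RF_converges hC hL Cb hpsi cx x0 xs_D).
  move=> [l l0 xs_lx]; apply: (RF_converges_of_cvg hC hL Cb cx x0 _ l0 xs_lx).
  by move=> k; case: (xs_D k).
Qed.
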